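(* Let $q$ be a power of an odd prime with $q\equiv1\pmod4$, and let $k$ be a divisor of $q-1$ with $(q-1)/k$ even. If $(q,k)$ gives a $3$-design, then $(q^n,k)$ gives a $3$-design for every odd positive integer $n$.
   Context: For a prime power $Q\equiv1\pmod 4$ the group $\mathrm{PSL}(2,Q)$ acts on $\mathrm{PG}(1,Q)=\mathbb{F}_Q\cup\{\infty\}$ by linear fractional transformations $z\mapsto (az+b)/(cz+d)$ with $ad-bc$ a nonzero square in $\mathbb{F}_Q$. For a divisor $k$ of $Q-1$, ''$(Q,k)$ gives a $3$-design'' means that the $\mathrm{PSL}(2,Q)$-orbit of the unique subgroup of order $k$ of $\mathbb{F}_Q^\times$ is the block set of a $3$-$(Q+1,k,\lambda)$ design for some positive integer $\lambda$. *)

From mathcomp Require Import all_boot all_algebra.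
Set Implicit Arguments. Unset Strict Implicit. Unset Printing Implicit Defensive.
Import GRing.Theory.
Local Open Scope ring_scope.

(* Projective line PG(1,F) = F ∪ {∞}, encoded as [option F] with None = ∞. *)
Definition PG1 (F : finFieldType) := option F.

(* A quadruple (a,b,c,d) represents z |-> (a z + b)/(c z + d); it is an
   element of PSL(2,F) (modulo scalars) iff ad - bc is a nonzero square. *)
Definition is_psl (F : finFieldType) (g : F * F * F * F) : bool :=
  let: (a, b, c, d) := g in
  (a * d - b * c != 0) && [exists y : F, y ^+ 2 == a * d - b * c].

Definition lfrac (F : finFieldType) (g : F * F * F * F) (z : option F) : option F :=
  let: (a, b, c, d) := g in
  match z with
  | Some x => if c * x + d == 0 then None else Some ((a * x + b) / (c * x + d))
  | None => if c == 0 then None else Some (a / c)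
  end.

(* The subgroup of order k of F^x (for k | #|F| - 1): the k-th roots of unity,
   viewed as a subset of PG(1,F). *)
Definition base_block (F : finFieldType) (k : nat) : {set option F} :=
  [set z : option F | if z is Some x then x ^+ k == 1 else false].

Definition psl_orbit (F : finFieldType) (k : nat) : {set {set option F}} :=
  [set [set lfrac g z | z in base_block F k] | g : F * F * F * F & is_psl g].

Definition is_3design (P : finType) (k : nat) (D : {set {set P}}) : Prop :=
  (forall B, B \in D -> #|B| = k) /\
  exists lam : nat, (0 < lam)%N /\
    forall T : {set P}, #|T| = 3%N ->
      #|[set B in D | T \subset B]| = lam.

Definition gives_3design (F : finFieldType) (k : nat) : Prop :=
  is_3design k (psl_orbit F k).

(* PSL(2,q) has two orbits on ordered triples of distinct points of PG(1,q),
   told apart by whether the determinant of the cross-ratio map of the triple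
   is a square, and each triple is sent to each triple of its orbit by exactly
   q - 1 of the quadruples (a,b,c,d) counted by [psl_orbit].  Double counting
   pairs (block, group element) then shows that the number of blocks through a
   3-set T is proportional to the number of ordered triples of distinct points
   of the base block lying in the orbit of an ordering of T.  So (q,k) gives a
   3-design iff the base block contains as many "square" triples as
   "non-square" ones, and at least one.
   The base block of q^n consists of the k-th roots of unity of F_q, embedded
   in F_(q^n), and for odd n an element of F_q is a square in F_(q^n) iff it is
   a square in F_q: the Euler exponent (q^n - 1)/2 is (q - 1)/2 times the odd
   number 1 + q + ... + q^(n-1).  Hence both counts are the same for q^n as
   for q. *)

From HB Require Import structures.
From mathcomp Require Import all_boot all_algebra all_field all_solvable.
From mathcomp Require Import ring.
Set Implicit Arguments. Unset Strict Implicit. Unset Printing Implicit Defensive.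
Import GRing.Theory.
Local Open Scope ring_scope.

Section FinFieldSquares.
Variable L : finFieldType.

Definition is_square (x : L) : bool := [exists y : L, y ^+ 2 == x].

Lemma is_square0 : is_square 0.
Proof. by apply/existsP; exists 0; rewrite expr0n. Qed.

Lemma expf_card_pred (x : L) : x != 0 -> x ^+ #|L|.-1 = 1.
Proof.
move=> x0; apply: (mulfI x0); rewrite -exprS mulr1 prednK ?expf_card //.
exact: ltnW (finNzRing_gt1 L).
Qed.

Lemma finField_prim_root : {w : L | (#|L|.-1).-primitive_root w}.
Proof.
have L_gt1 := finNzRing_gt1 L.
have : has (#|L|.-1).-primitive_root (enum (predC1 (0 : L))).
  apply: has_prim_root; rewrite ?enum_uniq -?cardE ?cardC1 //.
    by rewrite -ltnS prednK // ltnW.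
  by apply/allP => x; rewrite mem_enum unity_rootE => /expf_card_pred ->.
by case/hasP/sig2W => w _; exists w.
Qed.

Lemma prim_root_neq0 n (w : L) : n.-primitive_root w -> w != 0.
Proof. by move=> w_prim; rewrite (prim_root_eq0 w_prim) -lt0n (prim_order_gt0 w_prim). Qed.

Lemma card_unity_roots k :
  (k %| #|L|.-1)%N -> #|[set x : L | x ^+ k == 1]| = k.
Proof.
move=> k_dvd; have [w w_prim] := finField_prim_root.
have z_prim := dvdn_prim_root w_prim k_dvd.
have k_gt0 : (0 < k)%N by apply: prim_order_gt0 z_prim.
apply/eqP; rewrite eqn_leq; apply/andP; split.
  rewrite cardE max_unity_roots ?enum_uniq //.
  by apply/allP => x; rewrite mem_enum inE unity_rootE.
set z := w ^+ _ in z_prim.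
have z_inj : injective (fun i : 'I_k => z ^+ i).
  move=> i j /eqP; rewrite (eq_prim_root_expr z_prim) !modn_small ?ltn_ord //.
  by move/eqP/val_inj.
rewrite -[k in (k <= _)%N]card_ord -(card_imset _ z_inj) subset_leq_card //.
apply/subsetP => _ /imsetP [i _ ->].
by rewrite inE -exprM mulnC exprM (prim_expr_order z_prim) expr1n.
Qed.

Hypothesis oddL : odd #|L|.

Definition euler_exp : nat := (#|L|.-1)./2.

Lemma euler_exp_double : euler_exp.*2 = #|L|.-1.
Proof.
rewrite /euler_exp -[RHS]odd_double_half -subn1 oddB ?oddL //.
exact: ltnW (finNzRing_gt1 L).
Qed.

Lemma euler_exp_gt0 : (0 < euler_exp)%N.
Proof. by rewrite -double_gt0 euler_exp_double -subn1 subn_gt0 finNzRing_gt1. Qed.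

Lemma euler_criterion (x : L) : x != 0 -> is_square x = (x ^+ euler_exp == 1).
Proof.
move=> x0; apply/existsP/eqP => [[y /eqP yx] | ].
  have y0 : y != 0 by apply: contra_neq x0; rewrite -yx => ->; rewrite expr0n.
  by rewrite -yx -exprM mul2n euler_exp_double expf_card_pred.
have [w w_prim] := finField_prim_root.
have [[i /= _] ->] := prim_rootP w_prim (expf_card_pred x0).
rewrite -exprM => /eqP; rewrite -(prim_order_dvd w_prim) -euler_exp_double.
rewrite -mul2n dvdn_pmul2r => [/dvdnP [j ->]|]; first by exists (w ^+ j); rewrite exprM.
exact: euler_exp_gt0.
Qed.

Lemma euler_sign (x : L) : x != 0 -> (x ^+ euler_exp == 1) || (x ^+ euler_exp == -1).
Proof. by move=> x0; rewrite -sqrf_eq1 -exprM mulnC mul2n euler_exp_double expf_card_pred. Qed.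

Lemma euler_exp_lt : (euler_exp < #|L|.-1)%N.
Proof. by rewrite -euler_exp_double -addnn -[X in (X < _)%N]addn0 ltn_add2l euler_exp_gt0. Qed.

Lemma prim_root_euler_exp_neq1 (w : L) :
  (#|L|.-1).-primitive_root w -> w ^+ euler_exp != 1.
Proof.
by move=> w_prim; rewrite -(prim_order_dvd w_prim) gtnNdvd ?euler_exp_gt0 ?euler_exp_lt.
Qed.

Lemma oppr1_neq1 : (-1 : L) != 1.
Proof.
have [w w_prim] := finField_prim_root.
have /orP[w1|/eqP <-] := euler_sign (prim_root_neq0 w_prim).
  by have := prim_root_euler_exp_neq1 w_prim; rewrite w1.
exact: prim_root_euler_exp_neq1.
Qed.

Lemma is_squareM (x y : L) : x != 0 -> y != 0 ->
  is_square (x * y) = (is_square x == is_square y).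
Proof.
move=> x0 y0; rewrite !euler_criterion ?mulf_neq0 // exprMn.
have N1 := negbTE oppr1_neq1; have N1' : (1 == -1 :> L) = false by rewrite eq_sym.
by case/orP: (euler_sign x0) => /eqP->; case/orP: (euler_sign y0) => /eqP->;
  rewrite ?mulr1 ?mul1r ?mulN1r ?opprK ?eqxx ?N1 ?N1'.
Qed.

Lemma is_square_sqr (l x : L) : l != 0 -> x != 0 -> is_square (l ^+ 2 * x) = is_square x.
Proof.
move=> l0 x0; rewrite is_squareM ?expf_neq0 //.
by have -> : is_square (l ^+ 2) by apply/existsP; exists l.
Qed.

Lemma exists_nonsquare : exists2 nu : L, nu != 0 & ~~ is_square nu.
Proof.
have [w w_prim] := finField_prim_root.
have w0 := prim_root_neq0 w_prim.
by exists w; rewrite // euler_criterion // prim_root_euler_exp_neq1.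
Qed.

End FinFieldSquares.

Section LinearFractional.
Variable L : finFieldType.
Local Notation quad := (L * L * L * L)%type.
Implicit Types (g h : quad) (l : L).

Definition qdet g : L := let: (a, b, c, d) := g in a * d - b * c.
Definition qmul g h : quad :=
  let: (a, b, c, d) := g in let: (a', b', c', d') := h in
  (a * a' + b * c', a * b' + b * d', c * a' + d * c', c * b' + d * d').
Definition qadj g : quad := let: (a, b, c, d) := g in (d, - b, - c, a).
Definition qscale l g : quad := let: (a, b, c, d) := g in (l * a, l * b, l * c, l * d).
Definition qid : quad := (1, 0, 0, 1).

Lemma is_psl_qdet g : is_psl g = (qdet g != 0) && is_square (qdet g).
Proof. by case: g => [[[a b] c] d]. Qed.

Lemma is_psl_qdet_neq0 g : is_psl g -> qdet g != 0.
Proof. by rewrite is_psl_qdet => /andP []. Qed.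

Lemma qdet_mul g h : qdet (qmul g h) = qdet g * qdet h.
Proof. by case: g => [[[a b] c] d]; case: h => [[[a' b'] c'] d'] /=; ring. Qed.

Lemma qdet_adj g : qdet (qadj g) = qdet g.
Proof. by case: g => [[[a b] c] d] /=; ring. Qed.

Lemma qdet_scale l g : qdet (qscale l g) = l ^+ 2 * qdet g.
Proof. by case: g => [[[a b] c] d] /=; ring. Qed.

Lemma qdet_id : qdet qid = 1.
Proof. by rewrite /= mulr1 mulr0 subr0. Qed.

Lemma qmulA g h k : qmul g (qmul h k) = qmul (qmul g h) k.
Proof.
case: g => [[[a b] c] d]; case: h => [[[a' b'] c'] d']; case: k => [[[x y] z] w] /=.
by congr (_, _, _, _); ring.
Qed.

Lemma qmul1l g : qmul qid g = g.
Proof. by case: g => [[[a b] c] d] /=; congr (_, _, _, _); ring. Qed.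

Lemma qmul1r g : qmul g qid = g.
Proof. by case: g => [[[a b] c] d] /=; congr (_, _, _, _); ring. Qed.

Lemma qscaleA l l' g : qscale l (qscale l' g) = qscale (l * l') g.
Proof. by case: g => [[[a b] c] d] /=; rewrite !mulrA. Qed.

Lemma qmul_scalel l g h : qmul (qscale l g) h = qscale l (qmul g h).
Proof.
by case: g => [[[a b] c] d]; case: h => [[[a' b'] c'] d'] /=; congr (_, _, _, _); ring.
Qed.

Lemma qmul_scaler g l h : qmul g (qscale l h) = qscale l (qmul g h).
Proof.
by case: g => [[[a b] c] d]; case: h => [[[a' b'] c'] d'] /=; congr (_, _, _, _); ring.
Qed.

Lemma qmul_adjl g : qmul (qadj g) g = qscale (qdet g) qid.
Proof. by case: g => [[[a b] c] d] /=; congr (_, _, _, _); ring. Qed.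

Lemma qmul_adjr g : qmul g (qadj g) = qscale (qdet g) qid.
Proof. by case: g => [[[a b] c] d] /=; congr (_, _, _, _); ring. Qed.

Lemma qmul_adjKl g h : qmul (qadj g) (qmul g h) = qscale (qdet g) h.
Proof.
by case: g => [[[a b] c] d]; case: h => [[[a' b'] c'] d'] /=; congr (_, _, _, _); ring.
Qed.

Lemma qscale_inj l : l != 0 -> injective (qscale l).
Proof.
move=> l0 [[[a b] c] d] [[[a' b'] c'] d'] [] /(mulfI l0)-> /(mulfI l0)->.
by move=> /(mulfI l0)-> /(mulfI l0)->.
Qed.

Lemma qscale_injl g : qdet g != 0 -> injective (qscale^~ g).
Proof.
move=> g0 l l' /(congr1 (qmul (qadj g))); rewrite !qmul_scaler qmul_adjl !qscaleA.
by case; rewrite !mulr1 => /(mulIf g0).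
Qed.

Lemma lfrac_qmul g h z : qdet g != 0 -> qdet h != 0 ->
  lfrac (qmul g h) z = lfrac g (lfrac h z).
Proof.
case: g => [[[a b] c] d]; case: h => [[[a' b'] c'] d'] /= dg dh.
case: z => [x|] /=.
  have [e|ne] := eqVneq (c' * x + d') 0.
    have E1 : (c * a' + d * c') * x + (c * b' + d * d') = c * (a' * x + b').
      by rewrite -[RHS]addr0 -(mulr0 d) -e; ring.
    have E2 : (a * a' + b * c') * x + (a * b' + b * d') = a * (a' * x + b').
      by rewrite -[RHS]addr0 -(mulr0 b) -e; ring.
    have nz : a' * x + b' != 0.
      apply: contra dh => /eqP e2.
      have -> : a' * d' - b' * c' = a' * (c' * x + d') - c' * (a' * x + b') by ring.
      by rewrite e e2 !mulr0 subrr.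
    rewrite E1 E2 mulf_eq0 (negbTE nz) orbF.
    by case: ifP => // c0; congr Some; field; rewrite nz c0.
  set y := (a' * x + b') / (c' * x + d').
  have E1 : (c * a' + d * c') * x + (c * b' + d * d') = (c * y + d) * (c' * x + d').
    by rewrite /y; field.
  have E2 : (a * a' + b * c') * x + (a * b' + b * d') = (a * y + b) * (c' * x + d').
    by rewrite /y; field.
  rewrite E1 E2 mulf_eq0 (negbTE ne) orbF.
  by case: ifP => // c0; congr Some; field; rewrite ne c0.
have [e|ne] := eqVneq c' 0.
  rewrite e !mulr0 !addr0.
  have na : a' != 0 by apply: contra dh => /eqP ->; rewrite e mul0r mulr0 subrr.
  rewrite mulf_eq0 (negbTE na) orbF.
  by case: ifP => // c0; congr Some; field; rewrite na c0.
have E1 : c * a' + d * c' = (c * (a' / c') + d) * c' by field.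
have E2 : a * a' + b * c' = (a * (a' / c') + b) * c' by field.
rewrite E1 E2 mulf_eq0 (negbTE ne) orbF.
by case: ifP => // c0; congr Some; field; rewrite ne E1 mulf_eq0 c0 (negbTE ne).
Qed.

Lemma lfrac_qscale l g z : l != 0 -> lfrac (qscale l g) z = lfrac g z.
Proof.
case: g => [[[a b] c] d] /= l0; case: z => [x|] /=.
  rewrite -!mulrA -mulrDr mulf_eq0 (negbTE l0) /=; case: ifP => // _.
  by rewrite -mulrDr invfM mulrACA divff ?mul1r.
by rewrite mulf_eq0 (negbTE l0) /=; case: ifP => // _; rewrite invfM mulrACA divff ?mul1r.
Qed.

Lemma lfrac_qid z : lfrac qid z = z.
Proof.
by case: z => [x|] /=; rewrite ?eqxx // mul0r add0r oner_eq0 mul1r addr0 divr1.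
Qed.

Lemma lfrac_qadjK g : qdet g != 0 -> cancel (lfrac g) (lfrac (qadj g)).
Proof.
move=> g0 z; rewrite -lfrac_qmul ?qdet_adj // qmul_adjl lfrac_qscale //.
exact: lfrac_qid.
Qed.

Lemma lfrac_qadjVK g : qdet g != 0 -> cancel (lfrac (qadj g)) (lfrac g).
Proof.
move=> g0 z; rewrite -lfrac_qmul ?qdet_adj // qmul_adjr lfrac_qscale //.
exact: lfrac_qid.
Qed.

Lemma lfrac_inj g : qdet g != 0 -> injective (lfrac g).
Proof. by move=> g0; apply: can_inj (lfrac_qadjK g0). Qed.

End LinearFractional.

Section ThreeTransitivity.
Variable L : finFieldType.
Local Notation quad := (L * L * L * L)%type.
Local Notation triple := (option L * option L * option L)%type.
Implicit Types (g h : quad) (t s : triple).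

Definition distinct3 t := [&& t.1.1 != t.1.2, t.1.1 != t.2 & t.1.2 != t.2].

Definition qmaps g t s :=
  [&& lfrac g t.1.1 == s.1.1, lfrac g t.1.2 == s.1.2 & lfrac g t.2 == s.2].

(* The cross-ratio map z |-> (z - b)(c - a) / ((z - a)(c - b)), sending
   (a, b, c) to (oo, 0, 1). *)
Definition std_quad t : quad :=
  match t with
  | (None, Some b, Some c) => (1, - b, 0, c - b)
  | (Some a, None, Some c) => (0, c - a, 1, - a)
  | (Some a, Some b, None) => (1, - b, 1, - a)
  | (Some a, Some b, Some c) => (c - a, - b * (c - a), c - b, - a * (c - b))
  | _ => qid L
  end.

(* Indexes the two PSL(2,F)-orbits on distinct triples (see [card_psl_qmaps]). *)
Definition triple_sign t := is_square (qdet (std_quad t)).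

Lemma std_quadP t : distinct3 t ->
  [/\ qdet (std_quad t) != 0, lfrac (std_quad t) t.1.1 = None,
      lfrac (std_quad t) t.1.2 = Some 0 & lfrac (std_quad t) t.2 = Some 1].
Proof.
have subr_neq0 (a b : L) : Some a != Some b -> b - a != 0.
  by move=> ab; rewrite subr_eq0 eq_sym; apply: contra ab => /eqP ->.
case: t => [[[a|] [b|]] [c|]] //=; rewrite /distinct3 /=.
- case/and3P => /subr_neq0 ab /subr_neq0 ac /subr_neq0 bc.
  have -> : (c - a) * (- a * (c - b)) - - b * (c - a) * (c - b) = (c - a) * (c - b) * (b - a).
    by ring.
  have -> : (c - b) * a + - a * (c - b) = 0 by ring.
  have -> : (c - b) * b + - a * (c - b) = (c - b) * (b - a) by ring.
  have -> : (c - a) * b + - b * (c - a) = 0 by ring.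
  have -> : (c - b) * c + - a * (c - b) = (c - b) * (c - a) by ring.
  have -> : (c - a) * c + - b * (c - a) = (c - b) * (c - a) by ring.
  have bcba := mulf_neq0 bc ab; have bcca := mulf_neq0 bc ac.
  by rewrite !mulf_neq0 // (negbTE bcba) (negbTE bcca) eqxx mul0r divff.
- rewrite andbT => /subr_neq0 ab.
  have -> : 1 * - a - - b * 1 = b - a by ring.
  by rewrite ab !mul1r subrr eqxx (negbTE ab) subrr mul0r oner_eq0 invr1.
- rewrite andbT => /subr_neq0 ac.
  have -> : 0 * - a - (c - a) * 1 = - (c - a) by ring.
  by rewrite oppr_eq0 ac !mul1r subrr eqxx oner_eq0 !mul0r add0r (negbTE ac) divff.
- move=> /subr_neq0 bc.
  have -> : 1 * (c - b) - - b * 0 = c - b by ring.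
  by rewrite bc eqxx !mul0r !add0r !mul1r (negbTE bc) subrr mul0r divff.
Qed.

Lemma lfrac_fix3 h : qdet h != 0 -> lfrac h None = None ->
  lfrac h (Some 0) = Some 0 -> lfrac h (Some 1) = Some 1 ->
  exists2 l, l != 0 & h = qscale l (qid L).
Proof.
case: h => [[[a b] c] d] /= h0; case: eqP => // -> _; rewrite mul0r !add0r in h0 *.
case: eqP => // /eqP d0 [] /eqP; rewrite mulr0 add0r mulf_eq0 invr_eq0 (negbTE d0) orbF.
move=> /eqP->; rewrite addr0 mulr1; case: ifP => // _ [] /eqP.
rewrite add0r mulr1 => /eqP ad.
have {ad} -> : a = d by rewrite -(divfK d0 a) ad mul1r.
by exists d; rewrite // !mulr0 mulr1.
Qed.

Lemma qmapsP t s g : distinct3 t -> distinct3 s -> qdet g != 0 ->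
  reflect (exists2 l, l != 0 & g = qscale l (qmul (qadj (std_quad s)) (std_quad t)))
          (qmaps g t s).
Proof.
move=> /std_quadP [t0 t1 t2 t3] /std_quadP [s0 s1 s2 s3] g0.
set As := std_quad s in s0 s1 s2 s3 *; set At := std_quad t in t0 t1 t2 t3 *.
apply: (iffP and3P) => [[/eqP g1 /eqP g2 /eqP g3] | [l l0 ->]]; last first.
  by split; apply/eqP; rewrite lfrac_qscale // lfrac_qmul ?qdet_adj //;
    rewrite ?t1 ?t2 ?t3 -?s1 -?s2 -?s3 lfrac_qadjK.
set h := qmul As (qmul g (qadj At)).
have h0 : qdet h != 0 by rewrite !qdet_mul qdet_adj !mulf_neq0.
have lfrac_h z w : lfrac At w = z -> lfrac h z = lfrac As (lfrac g w).
  by move=> <-; rewrite !lfrac_qmul ?qdet_mul ?qdet_adj ?mulf_neq0 // lfrac_qadjK.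
have [m m0 hm] : exists2 m, m != 0 & h = qscale m (qid L).
  by apply: lfrac_fix3; rewrite // (lfrac_h _ _ t1, lfrac_h _ _ t2, lfrac_h _ _ t3)
    ?g1 ?g2 ?g3 ?s1 ?s2 ?s3.
have dsdt0 : qdet As * qdet At != 0 by rewrite mulf_neq0.
exists (m / (qdet As * qdet At)); first by rewrite mulf_neq0 ?invr_eq0.
apply: (qscale_inj dsdt0); rewrite qscaleA mulrCA divff // mulr1.
have <- : qmul (qadj As) (qmul h At) = qscale (qdet As * qdet At) g.
  by rewrite /h -qmulA qmul_adjKl -qmulA qmul_adjl qmul_scaler qmul1r qscaleA.
by rewrite hm qmul_scalel qmul1l qmul_scaler.
Qed.

Hypothesis oddL : odd #|L|.

Lemma card_psl_qmaps t s : distinct3 t -> distinct3 s ->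
  #|[set g | is_psl g && qmaps g t s]| =
    if triple_sign t == triple_sign s then #|L|.-1 else 0%N.
Proof.
move=> dt ds; have [t0 _ _ _] := std_quadP dt; have [s0 _ _ _] := std_quadP ds.
set P := qmul (qadj (std_quad s)) (std_quad t).
have P0 : qdet P != 0 by rewrite qdet_mul qdet_adj mulf_neq0.
have psl_scaleP l : l != 0 ->
    is_psl (qscale l P) = (triple_sign t == triple_sign s).
  move=> l0; rewrite is_psl_qdet qdet_scale mulf_neq0 ?expf_neq0 //=.
  by rewrite is_square_sqr // qdet_mul qdet_adj is_squareM // eq_sym.
have -> : [set g | is_psl g && qmaps g t s] =
    [set g in (fun l => qscale l P) @: [set~ (0 : L)] | triple_sign t == triple_sign s].
  apply/setP => g; rewrite !inE; apply/andP/andP => [[psl_g] | [/imsetP [l l0 ->] sgn]].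
    case/(qmapsP dt ds (is_psl_qdet_neq0 psl_g)) => l l0 gE.
    rewrite -(psl_scaleP l l0) -gE psl_g gE; split=> //.
    by apply/imsetP; exists l; rewrite ?inE.
  rewrite !inE in l0; rewrite psl_scaleP // sgn; split=> //.
  by apply/(qmapsP dt ds); [rewrite qdet_scale mulf_neq0 ?expf_neq0 | exists l].
case: eqP => _; last by apply/eqP; rewrite cards_eq0 setIdE setI0.
by rewrite setIdE setIT card_imset ?cardsC1 //; apply: qscale_injl.
Qed.

End ThreeTransitivity.

Lemma cards3P (T : finType) (A : {set T}) : #|A| = 3 ->
  exists x y z, [/\ x != y, x != z, y != z & A = [set x; y; z]].
Proof.
rewrite cardE => A3; have := enum_uniq (mem A).
case E: (enum A) A3 => [|x [|y [|z [|w s]]]] //= _.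
rewrite !inE !negb_or => /and3P [/andP [xy xz] yz _].
exists x, y, z; split => //; apply/setP => v.
by rewrite -mem_enum E !inE orbA.
Qed.

Lemma card_sum_fibers (I J : finType) (A : {set I}) (C : {set J}) (f : I -> J) :
  {in A, forall i, f i \in C} ->
  #|A| = (\sum_(j in C) #|[set i in A | f i == j]|)%N.
Proof.
move=> fAC; rewrite -sum1_card (partition_big f (mem C)) //.
by apply: eq_bigr => j _; rewrite -sum1_card; apply: eq_bigl => i; rewrite inE.
Qed.

Lemma leq_card_in_inj (T T' : finType) (A : {set T}) (B : {set T'}) (f : T -> T') :
  {in A &, injective f} -> {in A, forall x, f x \in B} -> (#|A| <= #|B|)%N.
Proof.
move=> f_inj fAB; rewrite -(card_in_imset f_inj) subset_leq_card //.
by apply/subsetP => _ /imsetP [x xA ->]; apply: fAB.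
Qed.

Section DesignCounting.
Variables (L : finFieldType) (k : nat).
Hypotheses (oddL : odd #|L|) (k_dvd : (k %| #|L|.-1)%N).
Local Notation quad := (L * L * L * L)%type.
Local Notation triple := (option L * option L * option L)%type.
Local Notation B0 := (base_block L k).
Implicit Types (g h : quad) (t : triple).

Definition block g := [set lfrac g z | z in B0].
Definition psl_fiber (B : {set option L}) := [set g | is_psl g && (block g == B)].
Definition psl_cover (T : {set option L}) := [set g | is_psl g && (T \subset block g)].
Definition blocks_through (T : {set option L}) := [set B in psl_orbit L k | T \subset B].
Definition triple_set t : {set option L} := [set t.1.1; t.1.2; t.2].
Definition base_triples := [set t | [&& distinct3 t, t.1.1 \in B0, t.1.2 \in B0 & t.2 \in B0]].
Definition base_triple_count (e : bool) := #|[set t in base_triples | triple_sign t == e]|.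

Lemma in_base_triples t :
  (t \in base_triples) = [&& distinct3 t, t.1.1 \in B0, t.1.2 \in B0 & t.2 \in B0].
Proof. by rewrite inE. Qed.

Lemma is_psl_qmul g h : is_psl g -> is_psl h -> is_psl (qmul g h).
Proof.
rewrite !is_psl_qdet qdet_mul => /andP [g0 sg] /andP [h0 sh].
by rewrite mulf_neq0 //= is_squareM // sg sh.
Qed.

Lemma is_psl_qadj g : is_psl g -> is_psl (qadj g).
Proof. by rewrite !is_psl_qdet qdet_adj. Qed.

Lemma is_psl_qid : is_psl (qid L).
Proof. by rewrite is_psl_qdet qdet_id oner_eq0; apply/existsP; exists 1; rewrite expr1n. Qed.

Lemma base_blockE : B0 = Some @: [set x : L | x ^+ k == 1].
Proof.
apply/setP => [[x|]]; rewrite !inE; last by apply/esym/imsetP => -[].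
by rewrite (mem_imset _ _ (@Some_inj _)) inE.
Qed.

Lemma card_base_block : #|B0| = k.
Proof. by rewrite base_blockE card_imset ?card_unity_roots //; apply: Some_inj. Qed.

Lemma card_block g : qdet g != 0 -> #|block g| = k.
Proof. by move=> g0; rewrite card_imset ?card_base_block //; apply: lfrac_inj. Qed.

Lemma block_qmul g h : qdet g != 0 -> qdet h != 0 -> block (qmul g h) = lfrac g @: block h.
Proof. by move=> g0 h0; rewrite -imset_comp; apply: eq_imset => z; rewrite /= lfrac_qmul. Qed.

Lemma block_qadjK h : qdet h != 0 -> lfrac (qadj h) @: block h = B0.
Proof.
by move=> h0; rewrite -imset_comp (eq_imset _ (lfrac_qadjK h0)) imset_id.
Qed.

Lemma block_qid : block (qid L) = B0.
Proof. by rewrite /block (eq_imset _ (@lfrac_qid L)) imset_id. Qed.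

Lemma psl_orbitP B : reflect (exists2 g, is_psl g & B = block g) (B \in psl_orbit L k).
Proof.
apply: (iffP imsetP) => [[g] | [g psl_g ->]]; first by rewrite inE => psl_g ->; exists g.
by exists g; rewrite ?inE.
Qed.

Lemma leq_card_psl_fiber a B : is_psl a ->
  (#|psl_fiber B| <= #|psl_fiber (lfrac a @: B)|)%N.
Proof.
move=> psl_a; have a0 := is_psl_qdet_neq0 psl_a.
apply: (@leq_card_in_inj _ _ _ _ (qmul a)).
  by move=> g g' _ _ /(congr1 (qmul (qadj a))); rewrite !qmul_adjKl; apply: qscale_inj.
move=> g; rewrite !inE => /andP [psl_g /eqP <-].
by rewrite is_psl_qmul //= block_qmul ?is_psl_qdet_neq0.
Qed.

Lemma card_psl_fiber h : is_psl h -> #|psl_fiber (block h)| = #|psl_fiber B0|.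
Proof.
move=> psl_h; have h0 := is_psl_qdet_neq0 psl_h.
apply/eqP; rewrite eqn_leq; apply/andP; split.
  by rewrite -(block_qadjK h0) leq_card_psl_fiber ?is_psl_qadj.
have -> : block h = lfrac h @: B0.
  by rewrite -block_qid -block_qmul ?qdet_id ?oner_eq0 ?qmul1r.
exact: leq_card_psl_fiber.
Qed.

Lemma card_psl_cover T :
  (#|blocks_through T| * #|psl_fiber B0|)%N = #|psl_cover T|.
Proof.
rewrite (@card_sum_fibers _ _ (psl_cover T) (blocks_through T) block); last first.
  move=> g; rewrite !inE => /andP [psl_g ->]; rewrite andbT.
  by apply/psl_orbitP; exists g.
rewrite -sum_nat_const; apply: eq_bigr => B; rewrite inE => /andP [].
move=> /psl_orbitP [h psl_h ->] T_h; rewrite -(card_psl_fiber psl_h).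
by apply: eq_card => g; rewrite !inE; case: eqP => [->|]; rewrite ?T_h ?andbT ?andbF.
Qed.

Lemma card_psl_cover_triple t : distinct3 t ->
  #|psl_cover (triple_set t)| = (#|L|.-1 * base_triple_count (triple_sign t))%N.
Proof.
move=> dt; pose pre g : triple :=
  (lfrac (qadj g) t.1.1, lfrac (qadj g) t.1.2, lfrac (qadj g) t.2).
rewrite (@card_sum_fibers _ _ _ base_triples pre); last first.
  move=> g; rewrite inE => /andP [/is_psl_qdet_neq0 g0 /subsetP t_g].
  have pre_B0 z : z \in triple_set t -> lfrac (qadj g) z \in B0.
    by move=> /t_g /imsetP [w w_B0 ->]; rewrite lfrac_qadjK.
  rewrite inE !pre_B0 ?inE ?eqxx ?orbT // !andbT.
  by move: dt; rewrite /distinct3 /= !(inj_eq (lfrac_inj _)) ?qdet_adj.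
rewrite mulnC -sum_nat_const big_mkcond [RHS]big_mkcond /=.
apply: eq_bigr => b _; rewrite [b \in [set _ in _ | _]]inE.
have [|//] := boolP (b \in base_triples); rewrite inE => /and4P [db b1 b2 b3].
rewrite -(card_psl_qmaps oddL db dt); apply: eq_card => g; rewrite !inE.
apply/andP/andP => [[/andP [psl_g _] /eqP <-] | [psl_g /and3P [/eqP g1 /eqP g2 /eqP g3]]].
  have g0 := is_psl_qdet_neq0 psl_g.
  by split=> //; rewrite /qmaps /= !lfrac_qadjVK ?eqxx.
have g0 := is_psl_qdet_neq0 psl_g; split.
  rewrite psl_g; apply/subsetP => z; rewrite !inE -g1 -g2 -g3.
  by case/orP => [/orP [] |] /eqP ->; apply: imset_f.
by rewrite /pre -g1 -g2 -g3 !lfrac_qadjK // -!surjective_pairing.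
Qed.

Lemma card_blocks_through_triple t : distinct3 t ->
  (#|blocks_through (triple_set t)| * #|psl_fiber B0|)%N =
    (#|L|.-1 * base_triple_count (triple_sign t))%N.
Proof. by move=> dt; rewrite card_psl_cover card_psl_cover_triple. Qed.

Lemma psl_fiber_base_gt0 : (0 < #|psl_fiber B0|)%N.
Proof. by apply/card_gt0P; exists (qid L); rewrite inE is_psl_qid block_qid eqxx. Qed.

Lemma card_triple_set t : distinct3 t -> #|triple_set t| = 3.
Proof.
case/and3P => t12 t13 t23; rewrite (@eq_card _ _ (mem [:: t.1.1; t.1.2; t.2])).
  by apply/card_uniqP; rewrite /= !inE negb_or t12 t13 t23.
by move=> z; rewrite !inE orbA.
Qed.

Lemma triple_setP (T : {set option L}) : #|T| = 3 -> exists2 t, distinct3 t & T = triple_set t.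
Proof. by case/cards3P => x [y [z [xy xz yz ->]]]; exists (x, y, z); first apply/and3P. Qed.

Lemma distinct3_inf0 (x : L) : x != 0 -> distinct3 (None, Some 0, Some x).
Proof. by move=> x0; rewrite /distinct3 /= (inj_eq (@Some_inj _)) eq_sym x0. Qed.

Lemma triple_sign_inf0 (x : L) : triple_sign (None, Some 0, Some x) = is_square x.
Proof. by rewrite /triple_sign /= !subr0 oppr0 mulr0 subr0 mul1r. Qed.

Lemma gives_3designE :
  gives_3design L k <->
  base_triple_count true = base_triple_count false /\ (0 < base_triple_count true)%N.
Proof.
have q1_gt0 : (0 < #|L|.-1)%N by rewrite -subn1 subn_gt0 finNzRing_gt1.
(* (oo, 0, 1) and (oo, 0, nu) for a non-square nu represent the two orbits. *)
have [nu nu0 nu_nsq] := exists_nonsquare oddL.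
have d1 := distinct3_inf0 (oner_neq0 L); have d_nu := distinct3_inf0 nu0.
have E1 := card_blocks_through_triple d1; have E_nu := card_blocks_through_triple d_nu.
have sq1 : is_square (1 : L) by apply/existsP; exists 1; rewrite expr1n.
rewrite triple_sign_inf0 sq1 in E1; rewrite triple_sign_inf0 (negbTE nu_nsq) in E_nu.
split=> [[_ [lam [lam_gt0 lamP]]] | [cnt_eq cnt_gt0]].
  rewrite /blocks_through !lamP ?card_triple_set // in E1 E_nu.
  split; first by apply/eqP; rewrite -(eqn_pmul2l q1_gt0) -E1 -E_nu.
  by rewrite -(ltn_pmul2l q1_gt0) muln0 -E1 muln_gt0 lam_gt0 psl_fiber_base_gt0.
split=> [B /psl_orbitP [g /is_psl_qdet_neq0 g0 ->] | ]; first exact: card_block.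
exists #|blocks_through (triple_set (None, Some 0, Some 1))|; split.
  by rewrite -(ltn_pmul2r psl_fiber_base_gt0) mul0n E1 muln_gt0 q1_gt0.
move=> T /triple_setP [t dt ->]; apply/eqP; rewrite -(eqn_pmul2r psl_fiber_base_gt0).
rewrite -[#|[set _ in _ | _]|]/#|blocks_through _| card_blocks_through_triple // E1.
by case: triple_sign; rewrite ?cnt_eq.
Qed.

End DesignCounting.

Section FinFieldEmbedding.
Variables (F K : finFieldType) (p : nat).
Hypotheses (pF : p \in [pchar F]) (pK : p \in [pchar K]).
Hypothesis expf_cardK : forall x : F, x ^+ #|K| = x.

Local Notation E := (pPrimeCharType pF).
Definition prime_subfield_F : {rmorphism 'F_p -> F} := in_alg E : {rmorphism 'F_p -> E}.
Definition prime_subfield_K : {rmorphism 'F_p -> K} :=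
  in_alg (pPrimeCharType pK) : {rmorphism 'F_p -> pPrimeCharType pK}.

Variable w : F.
Hypothesis w_prim : (#|F|.-1).-primitive_root w.

Lemma commr_prime_subfield (L : finFieldType) (f : {rmorphism 'F_p -> L}) (x : L) :
  commr_rmorph f x.
Proof. by move=> y; apply: mulrC. Qed.

Local Notation ev_w :=
  (horner_morph (commr_prime_subfield prime_subfield_F w) : {rmorphism {poly 'F_p} -> F}).

Lemma ev_wX : ev_w 'X = w.
Proof. exact: horner_morphX. Qed.

Lemma minPoly_prime_subfield :
  {f : {poly 'F_p} | (1 < size f)%N & forall P, (ev_w P == 0) = (f %| P)}.
Proof.
have /polyOver1P/sig_eqW [f fE] := minPolyOver 1 (w : E).
exists f.
  by rewrite -(size_map_poly (in_alg E)) -fE size_minPoly /adjoin_degree.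
move=> P; rewrite -(dvdp_map (in_alg E)) -fE; apply/idP/idP => [w_root | ].
  by apply: minPoly_dvdp; [apply/polyOver1P; exists P | exact: w_root].
by move/root_dvdp; apply; apply: root_minPoly.
Qed.

Lemma exists_root_in_K (f : {poly 'F_p}) : (1 < size f)%N ->
  (forall P, (ev_w P == 0) = (f %| P)) ->
  exists u : K, root (map_poly prime_subfield_K f) u.
Proof.
move=> f_gt1 ev_w_eq0.
have : map_poly prime_subfield_K f %| 'X^#|K| - 'X.
  have -> : 'X^#|K| - 'X = map_poly prime_subfield_K ('X^#|K| - 'X).
    by rewrite rmorphB; congr (_ - _); symmetry; [apply: map_polyXn | apply: map_polyX].
  rewrite dvdp_map.
  by rewrite -ev_w_eq0 rmorphB rmorphXn ev_wX expf_cardK subrr.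
rewrite finField_genPoly => /dvdp_prod_XsubC [m fE].
case: (mask m _) fE => [|u s] fE.
  by move/eqp_size: fE; rewrite big_nil size_poly1 size_map_poly => f1; rewrite f1 in f_gt1.
by exists u; rewrite (eqp_root fE) big_cons rootM root_XsubC eqxx.
Qed.

Lemma ev_w_surj (x : F) : exists P, ev_w P == x.
Proof.
have [-> | x0] := eqVneq x 0; first by exists 0; rewrite rmorph0.
have [i ->] := prim_rootP w_prim (expf_card_pred x0).
by exists 'X^i; rewrite rmorphXn ev_wX.
Qed.

Variable f : {poly 'F_p}.
Hypothesis ev_w_eq0 : forall P, (ev_w P == 0) = (f %| P).
Variable u : K.
Hypothesis u_root : root (map_poly prime_subfield_K f) u.

Local Notation ev_u :=
  (horner_morph (commr_prime_subfield prime_subfield_K u) : {rmorphism {poly 'F_p} -> K}).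

Lemma ev_u_congr P Q : ev_w P = ev_w Q -> ev_u P = ev_u Q.
Proof.
move=> /eqP; rewrite -subr_eq0 -rmorphB ev_w_eq0 => /dvdpP [R /eqP].
rewrite subr_eq => /eqP->; rewrite rmorphD rmorphM /= -[ev_u f]/((map_poly _ f).[u]).
by rewrite (rootP u_root) mulr0 add0r.
Qed.

(* F = F_p[w]; the embedding sends w to a root u in K of its minimal polynomial. *)
Definition embedding (x : F) : K := ev_u (xchoose (ev_w_surj x)).

Lemma embeddingE P : embedding (ev_w P) = ev_u P.
Proof. by apply: ev_u_congr; apply/eqP; apply: (xchooseP (ev_w_surj _)). Qed.

Fact embedding_is_zmod : zmod_morphism embedding.
Proof.
move=> x y; have [P /eqP <-] := ev_w_surj x; have [Q /eqP <-] := ev_w_surj y.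
by rewrite -rmorphB !embeddingE rmorphB.
Qed.

Fact embedding_is_monoid : monoid_morphism embedding.
Proof.
split; first by rewrite -(rmorph1 ev_w) embeddingE rmorph1.
move=> x y; have [P /eqP <-] := ev_w_surj x; have [Q /eqP <-] := ev_w_surj y.
by rewrite -rmorphM !embeddingE rmorphM.
Qed.

HB.instance Definition _ := GRing.isZmodMorphism.Build F K embedding embedding_is_zmod.
HB.instance Definition _ := GRing.isMonoidMorphism.Build F K embedding embedding_is_monoid.

Lemma embedding_exists : inhabited {rmorphism F -> K}.
Proof. exact: inhabits (embedding : {rmorphism F -> K}). Qed.

End FinFieldEmbedding.

Lemma finField_embedding (F K : finFieldType) n :
  #|K| = (#|F| ^ n)%N -> inhabited {rmorphism F -> K}.
Proof.
move=> cardK; have [p p_pr pF] := finPcharP F.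
have pK : p \in [pchar K].
  by apply: (@card_finPcharP _ p (logn p #|F| * n)); rewrite // cardK expnM -card_pprimeChar.
have expf_cardK (x : F) : x ^+ #|K| = x.
  by rewrite cardK; elim: n {cardK} => [|m IHm]; rewrite ?expr1 // expnSr exprM IHm expf_card.
have [w w_prim] := finField_prim_root F.
have [f f_gt1 ev_w_eq0] := minPoly_prime_subfield pF w.
have [u u_root] := exists_root_in_K pK expf_cardK f_gt1 ev_w_eq0.
exact: (embedding_exists w_prim ev_w_eq0 u_root).
Qed.

Section OddDegreeTransfer.
Variables (F K : finFieldType) (phi : {rmorphism F -> K}) (n : nat).
Hypotheses (oddF : odd #|F|) (odd_n : odd n) (cardK : #|K| = (#|F| ^ n)%N).

Lemma odd_cardK : odd #|K|.
Proof. by rewrite cardK oddX oddF orbT. Qed.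

Lemma euler_exp_pow : euler_exp K = (euler_exp F * \sum_(i < n) #|F| ^ i)%N.
Proof.
rewrite [LHS]/euler_exp cardK predn_exp -(euler_exp_double oddF).
by rewrite -mul2n -mulnA mul2n doubleK.
Qed.

Lemma odd_geometric_sum : odd (\sum_(i < n) #|F| ^ i)%N.
Proof.
have oddS m : odd (\sum_(i < m) #|F| ^ i)%N = odd m.
  by elim: m => [|m IHm]; rewrite ?big_ord0 // big_ord_recr /= oddD IHm oddX oddF orbT addbT.
by rewrite oddS.
Qed.

Lemma is_square_rmorph (x : F) : is_square (phi x) = is_square x.
Proof.
have [-> | x0] := eqVneq x 0; first by rewrite rmorph0 !is_square0.
rewrite (euler_criterion odd_cardK) ?fmorph_eq0 // (euler_criterion oddF) //.
rewrite euler_exp_pow exprM -rmorphXn.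
case/orP: (euler_sign oddF x0) => /eqP->; first by rewrite rmorph1 expr1n !eqxx.
rewrite rmorphN1 -signr_odd odd_geometric_sum expr1.
by rewrite (negbTE (oppr1_neq1 odd_cardK)) (negbTE (oppr1_neq1 oddF)).
Qed.

Definition triple_map (t : option F * option F * option F) : option K * option K * option K :=
  (omap phi t.1.1, omap phi t.1.2, omap phi t.2).

Lemma omap_rmorph_inj : injective (omap phi).
Proof. exact/inj_omap/fmorph_inj. Qed.

Lemma triple_map_inj : injective triple_map.
Proof.
by move=> [[a b] c] [[a' b'] c'] [] /omap_rmorph_inj-> /omap_rmorph_inj-> /omap_rmorph_inj->.
Qed.

Lemma distinct3_map t : distinct3 (triple_map t) = distinct3 t.
Proof. by rewrite /distinct3 /= !(inj_eq omap_rmorph_inj). Qed.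

Lemma triple_sign_map t : triple_sign (triple_map t) = triple_sign t.
Proof.
rewrite /triple_sign -is_square_rmorph; congr is_square.
by case: t => [[[a|] [b|]] [c|]] /=; rewrite !(rmorphB, rmorphM, rmorphN, rmorph1, rmorph0).
Qed.

Variable k : nat.

Lemma omap_base_block z : (omap phi z \in base_block K k) = (z \in base_block F k).
Proof. by case: z => [x|]; rewrite !inE //= -rmorphXn fmorph_eq1. Qed.

Hypotheses (k_dvdF : (k %| #|F|.-1)%N) (k_dvdK : (k %| #|K|.-1)%N).

Lemma base_block_rmorph : base_block K k = omap phi @: base_block F k.
Proof.
apply/esym/eqP; rewrite eqEcard card_imset; last exact: omap_rmorph_inj.
rewrite !card_base_block // leqnn andbT.
by apply/subsetP => _ /imsetP [z zB ->]; rewrite omap_base_block.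
Qed.

Lemma base_triple_count_rmorph e : base_triple_count K k e = base_triple_count F k e.
Proof.
rewrite /base_triple_count -(card_imset _ triple_map_inj); apply: eq_card => t.
rewrite [t \in _]inE in_base_triples; apply/idP/imsetP => [|[s]]; last first.
  rewrite [s \in _]inE in_base_triples => s_in ->.
  by rewrite distinct3_map !omap_base_block triple_sign_map.
case: t => [[t1 t2] t3]; rewrite base_block_rmorph => /andP [/and4P [dt]] /=.
move=> /imsetP [x1 x1B ?] /imsetP [x2 x2B ?] /imsetP [x3 x3B ?] sgn; subst.
exists (x1, x2, x3) => //; rewrite [_ \in _]inE in_base_triples /= x1B x2B x3B.
by rewrite -distinct3_map -triple_sign_map /= dt sgn.
Qed.

End OddDegreeTransfer.

Local Close Scope ring_scope.

Theorem proposition3p3 (F : finFieldType) (q k : nat) :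
  #|F| = q -> odd q -> q %% 4 = 1 ->
  k %| q.-1 -> ~~ odd (q.-1 %/ k) ->
  gives_3design F k ->
  forall (n : nat) (K : finFieldType),
    odd n -> #|K| = (q ^ n)%N -> gives_3design K k.
Proof.
move=> <- oddF _ k_dvdF _ design_F n K odd_n cardK.
have [phi] := finField_embedding cardK.
have k_dvdK : (k %| #|K|.-1)%N by rewrite cardK predn_exp dvdn_mulr.
have count_eq := base_triple_count_rmorph phi oddF odd_n cardK k_dvdF k_dvdK.
apply/(gives_3designE (odd_cardK oddF cardK) k_dvdK); rewrite !count_eq.
exact/(gives_3designE oddF k_dvdF).
Qed.
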